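(* Let $p$ be an integer with $p>2$ and let $G$ be a graph with at least one vertex. Then $\mathrm{id}^{\leq p}(G) \leq \frac{1}{p-1}|E(G)| + \frac{p-2}{p-1}(|V(G)|-1)$.
   Context: All graphs are finite and simple. For an oriented graph $D$ and a set $X\subseteq V(D)$, the inversion of $X$ reverses the orientation of every arc with both endvertices in $X$. For an integer $p\ge 2$, a $(\leq p)$-inversion is the inversion of a set of at most $p$ vertices. For a graph $G$, $\mathrm{id}^{\leq p}(G)$ (the $(\leq p)$-inversion diameter) is the maximum, over all ordered pairs $(\vec G_1,\vec G_2)$ of orientations of $G$ (on the same labelled vertex set), of the minimum number of $(\leq p)$-inversions whose successive application transforms $\vec G_1$ into $\vec G_2$. *)

From mathcomp Require Import all_boot all_order all_algebra.
Set Implicit Arguments. Unset Strict Implicit. Unset Printing Implicit Defensive.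

(* A finite simple graph: vertex set V (a finType), adjacency relation e,
   assumed symmetric and irreflexive (hypotheses in the theorem). *)

Definition edges (V : finType) (e : rel V) : {set {set V}} :=
  [set X : {set V} | [exists u, exists v, e u v && (X == [set u; v])]].

(* An orientation of (V,e): a relation o ("arc u -> v") such that arcs are
   only on edges, and each edge gets exactly one direction. *)
Definition is_orientation (V : finType) (e : rel V) (o : rel V) : Prop :=
  (forall u v, o u v -> e u v) /\ (forall u v, e u v -> o u v = ~~ o v u).

Definition invert (V : finType) (X : {set V}) (o : rel V) : rel V :=
  fun u v => if (u \in X) && (v \in X) then o v u else o u v.

Definition apply_inversions (V : finType) (s : seq {set V}) (o : rel V) : rel V :=
  foldl (fun o' X => invert X o') o s.

Definition transforms (V : finType) (p : nat) (s : seq {set V}) (o1 o2 : rel V) : Prop :=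
  all (fun X : {set V} => #|X| <= p) s /\ apply_inversions s o1 =2 o2.

(* id^{<=p}(G) <= b, unfolded: for every ordered pair of orientations, some
   sequence of at most b (<= p)-inversions transforms the first into the second. *)
Definition inv_diam_le (V : finType) (e : rel V) (p : nat) (b : rat) : Prop :=
  forall o1 o2 : rel V, is_orientation e o1 -> is_orientation e o2 ->
    exists s : seq {set V}, transforms p s o1 o2 /\ ((size s)%:R <= b)%R.

From mathcomp Require Import all_boot all_order all_algebra.
From mathcomp Require Import zify.
Set Implicit Arguments. Unset Strict Implicit. Unset Printing Implicit Defensive.

(* The result of a sequence of inversions depends only on the parity of the
   number of inverted sets containing each pair of vertices. To reach [o2] from
   [o1] it thus suffices to realise, with sets of size at most [p], the set [D]
   of edges on which they differ, up to parity. Peel off a vertex [v]: its [d]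
   edges of [D] towards the remaining vertices are realised by ceil(d/(p-1))
   stars, each consisting of [v] and at most [p-1] of these neighbours; the
   stars also flip edges among the neighbours, which is absorbed by updating
   [D] before recursing. Since (p-1) ceil(d/(p-1)) <= d + (p-2), summing over
   the [|V|-1] peeled vertices gives (p-1) times the number of inversions
   at most [|E| + (p-2)(|V|-1)]. *)

Definition pair_count (V : finType) (s : seq {set V}) (u v : V) : nat :=
  count (fun X : {set V} => (u \in X) && (v \in X)) s.

Lemma pair_countC (V : finType) (s : seq {set V}) u v :
  pair_count s u v = pair_count s v u.
Proof. by apply: eq_count => X; rewrite andbC. Qed.

Lemma pair_count_cat (V : finType) (s1 s2 : seq {set V}) u v :
  pair_count (s1 ++ s2) u v = pair_count s1 u v + pair_count s2 u v.
Proof. exact: count_cat. Qed.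

Lemma pair_count_eq0 (V : finType) (s : seq {set V}) (W : {set V}) u v :
  all (fun X : {set V} => X \subset W) s -> u \notin W -> pair_count s u v = 0.
Proof.
move=> sW uW; apply/eqP; rewrite eqn0Ngt -has_count; apply/hasPn => X /(allP sW).
by move=> /subsetP XW; apply/negP => /andP [/XW]; rewrite (negbTE uW).
Qed.

Lemma apply_inversionsE (V : finType) (s : seq {set V}) (o : rel V) u v :
  apply_inversions s o u v =
  if odd (pair_count s u v) then o v u else o u v.
Proof.
rewrite /apply_inversions; elim: s o => [|X s IH] o //=.
rewrite IH /invert oddD.
by case: (u \in X); case: (v \in X); case: (odd _).
Qed.

Lemma orientation_off_edges (V : finType) (e : rel V) (o : rel V) u v :
  is_orientation e o -> ~~ e u v -> o u v = false.
Proof. by move=> [oe _] euv; apply: contraNF euv => /oe. Qed.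

Lemma apply_inversions_parity (V : finType) (e : rel V) (s : seq {set V})
    (o1 o2 : rel V) :
  symmetric e -> is_orientation e o1 -> is_orientation e o2 ->
  (forall u v, e u v -> odd (pair_count s u v) = (o1 u v != o2 u v)) ->
  apply_inversions s o1 =2 o2.
Proof.
move=> esym o1E o2E par u v; rewrite apply_inversionsE.
have [euv|neuv] := boolP (e u v).
  have evu : e v u by rewrite esym.
  rewrite par // (o1E.2 v u evu).
  by case: (o1 u v); case: (o2 u v).
have nevu : ~~ e v u by rewrite esym.
by rewrite !(orientation_off_edges o1E, orientation_off_edges o2E) ?if_same.
Qed.

Lemma star_inversions (p : nat) (V : finType) (v : V) (l : seq V) :
  1 < p -> uniq l -> v \notin l ->
  exists s : seq {set V},
  [/\ all (fun X : {set V} => (#|X| <= p) && (X \subset v |: [set x in l])) s,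
      (p - 1) * size s <= size l + (p - 2) &
      forall u, u != v -> odd (pair_count s v u) = (u \in l)].
Proof.
move=> p_gt1; have [n] := ubnP (size l); elim: n l => // n IH [|a l'] sz ul vl.
  by exists [::]; rewrite /= muln0.
set l := a :: l' in sz ul vl *; set C := take (p - 1) l; set r := drop (p - 1) l.
have lE : l = C ++ r by rewrite cat_take_drop.
have l_gt0 : 0 < size l by [].
have [|||s [sr bound par]] := IH r; rewrite ?size_drop ?drop_uniq //; first lia.
  by apply: contra vl => /mem_drop.
exists ((v |: [set x in C]) :: s); split.
- have cardX : #|v |: [set x in C]| <= p.
    have : size C <= p - 1 by rewrite size_take_min geq_minl.
    rewrite cardsU1 cardsE => sC.
    by apply: leq_trans (leq_add (leq_b1 _) (card_size C)) _; lia.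
  have subl (t : seq V) : {subset t <= l} -> [set x in t] \subset v |: [set x in l].
    move=> tl; apply/subsetP => x; rewrite in_set => /tl xl.
    by rewrite in_setU1 in_set xl orbT.
  rewrite /= cardX subUset sub1set setU11 subl /=; last by move=> x /mem_take.
  apply/allP => X /(allP sr) /andP [-> XS] /=; apply: subset_trans XS _.
  by rewrite subUset sub1set setU11 subl // => x /mem_drop.
- move: bound; rewrite size_drop /=.
  case: (size s) => [|k]; rewrite !mulnS ?muln0; first lia.
  by move: ((p - 1) * k) => x; lia.
- move=> u uv; rewrite [in X in _ = X]lE mem_cat /pair_count /= -/(pair_count s v u).
  rewrite oddD par // !in_setU1 !in_set eqxx (negbTE uv) /= oddb.
  move: ul; rewrite lE cat_uniq => /and3P [_ /hasPn Cr _].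
  by case uC: (u \in C); case ur: (u \in r) => //; move: (Cr u ur); rewrite uC.
Qed.

Definition inner_edges (V : finType) (e : rel V) (W : {set V}) : nat :=
  #|[set X in edges e | X \subset W]|.

Lemma inner_edges_setD1 (V : finType) (e : rel V) (W : {set V}) (v : V) :
  v \in W ->
  inner_edges e (W :\ v) + #|[set u in W :\ v | e v u]| <= inner_edges e W.
Proof.
move=> vW; set N := [set u in W :\ v | e v u].
have vN_inj : {in N &, injective (fun u => [set v; u])}.
  move=> u u' uN _ /setP /(_ u); rewrite !inE eqxx orbT.
  by move/esym/orP; case => [/eqP uv|/eqP //]; move: uN; rewrite uv !inE eqxx.
rewrite /inner_edges -(card_in_imset vN_inj) -cardsUI.
have -> : [set X in edges e | X \subset W :\ v] :&: [set [set v; u] | u in N] = set0.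
  apply/setP => X; rewrite !inE; apply/negbTE; apply/andP => -[/andP [_ XW]].
  by case/imsetP => u _ XE; move/subsetP: XW => /(_ v); rewrite XE !inE eqxx => /(_ isT).
rewrite cards0 addn0 subset_leq_card //; apply/subsetP => X.
rewrite !inE => /orP [/andP [-> /subset_trans -> //]|]; first exact: subsetDl.
case/imsetP => u; rewrite !inE => /andP [/andP [_ uW] evu] ->.
rewrite subUset !sub1set vW uW !andbT.
by apply/existsP; exists v; apply/existsP; exists u; rewrite evu eqxx.
Qed.

Section ParityRealization.

Variables (p : nat) (V : finType) (e : rel V).
Hypotheses (p_gt1 : 1 < p) (esym : symmetric e) (eirr : irreflexive e).

Lemma parity_realization n (W : {set V}) (D : rel V) :
  #|W| = n.+1 -> symmetric D ->
  exists s : seq {set V},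
  [/\ all (fun X : {set V} => (#|X| <= p) && (X \subset W)) s,
      {in W &, forall u w, e u w -> odd (pair_count s u w) = D u w} &
      (p - 1) * size s <= inner_edges e W + (p - 2) * n].
Proof.
elim: n W D => [|n IH] W D cardW Dsym.
  have [v Wv] := cards1P (introT eqP cardW).
  exists [::]; split=> //; rewrite ?muln0 // Wv => u w /set1P -> /set1P ->.
  by rewrite eirr.
have /card_gt0P [v vW] : 0 < #|W| by rewrite cardW.
set W' := W :\ v.
have cardW' : #|W'| = n.+1 by move: cardW; rewrite (cardsD1 v) vW => -[].
have vW' : v \notin W' by rewrite !inE eqxx.
set l := enum [set u in W' | D v u && e v u].
have vl : v \notin l by rewrite mem_enum inE (negbTE vW').
have [s1 [s1p s1size s1par]] := star_inversions p_gt1 (enum_uniq _) vl.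
have s1W : all (fun X : {set V} => X \subset W) s1.
  apply/allP => X /(allP s1p) /andP [_ /subset_trans -> //].
  rewrite subUset sub1set vW; apply/subsetP => x.
  by rewrite inE mem_enum !inE => /andP [/andP [_ ->]].
set D' := fun u w => D u w (+) odd (pair_count s1 u w).
have D'sym : symmetric D' by move=> u w; rewrite /D' Dsym pair_countC.
have [s2 [s2p s2par s2size]] := IH W' D' cardW' D'sym.
have s2W' : all (fun X : {set V} => X \subset W') s2.
  by apply/allP => X /(allP s2p) /andP [].
have par_v w : w \in W -> e v w -> odd (pair_count (s1 ++ s2) v w) = D v w.
  move=> wW evw; have wv : w != v by apply: contraTneq evw => ->; rewrite eirr.
  rewrite pair_count_cat (pair_count_eq0 _ s2W' vW') addn0 s1par // mem_enum !inE.
  by rewrite wv wW evw /= andbT.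
exists (s1 ++ s2); split.
- rewrite all_cat; apply/andP; split; apply/allP => X Xs.
    by rewrite (allP s1W X Xs) andbT; case/andP: (allP s1p X Xs).
  by case/andP: (allP s2p X Xs) => -> /subset_trans ->; rewrite ?subsetDl.
- move=> u w uW wW euw.
  have [uv|uv] := eqVneq u v; first by subst u; exact: par_v.
  have [wv|wv] := eqVneq w v; first by subst w; rewrite pair_countC Dsym par_v // esym.
  have uW' : u \in W' by rewrite !inE uv.
  have wW' : w \in W' by rewrite !inE wv.
  by rewrite pair_count_cat oddD s2par // /D' addbCA addbb addbF.
- have edges_v : size l <= #|[set u in W' | e v u]|.
    rewrite -cardE; apply: subset_leq_card; apply/subsetP => x.
    by rewrite !inE => /andP [-> /andP [_ ->]].
  have := inner_edges_setD1 e vW; rewrite -/W' size_cat mulnDr.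
  move: s1size s2size edges_v; rewrite -/l mulnS; lia.
Qed.

End ParityRealization.

Lemma inner_edges_setT (V : finType) (e : rel V) :
  inner_edges e [set: V] = #|edges e|.
Proof. by apply: eq_card => X; rewrite inE subsetT andbT. Qed.

Lemma orientation_diff_sym (V : finType) (e : rel V) (o1 o2 : rel V) :
  symmetric e -> is_orientation e o1 -> is_orientation e o2 ->
  symmetric (fun u v => o1 u v != o2 u v).
Proof.
move=> esym o1E o2E u v /=; have [euv|neuv] := boolP (e u v).
  by rewrite o1E.2 // o2E.2 // (inj_eq negb_inj).
have nevu : ~~ e v u by rewrite esym.
by rewrite !(orientation_off_edges o1E, orientation_off_edges o2E).
Qed.

Import GRing.Theory Num.Theory.

Lemma ler_natr_div (R : numFieldType) (q k m r n : nat) :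
  0 < q -> q * k <= m + r * n ->
  (k%:R <= 1 / q%:R * m%:R + r%:R / q%:R * n%:R :> R)%R.
Proof.
move=> q_gt0 qk_le.
have -> : (1 / q%:R * m%:R + r%:R / q%:R * n%:R = (m + r * n)%:R / q%:R :> R)%R.
  by rewrite natrD natrM mul1r mulrDl mulrC [X in (_ + X)%R]mulrAC.
by rewrite ler_pdivlMr ?ltr0n // -natrM ler_nat mulnC.
Qed.

Theorem mainTheorem3 (p : nat) (hp : 2 < p) (V : finType) (e : rel V)
  (esym : symmetric e) (eirr : irreflexive e) (hV : 0 < #|V|) :
  inv_diam_le e p
    ((1 / (p - 1)%:R) * #|edges e|%:R
     + ((p - 2)%:R / (p - 1)%:R) * (#|V| - 1)%:R : rat)%R.
Proof.
move=> o1 o2 o1E o2E.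
have p_gt1 : 1 < p by apply: ltnW.
have cardV : #|[set: V]| = (#|V| - 1).+1 by rewrite cardsT subn1 prednK.
have [s [s_small s_par s_size]] := parity_realization p_gt1 esym eirr cardV
  (orientation_diff_sym esym o1E o2E).
exists s; split; first split.
- by apply/allP => X /(allP s_small) /andP [].
- apply: apply_inversions_parity o1E o2E _ => // u v; apply: s_par; exact: in_setT.
- by apply: ler_natr_div; [rewrite subn_gt0 | rewrite -inner_edges_setT].
Qed.
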